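(* Fix an integer $L\ge1$ and $\alpha>0$, and let $N_{RF}\ge1$ be any number of RF chains. For the IT-SU interleaved training scheme with $N_t$ beams, $L$ channel paths, $N_{RF}$ RF chains and threshold $\alpha$ described in the context, the average training length satisfies, as $N_t\to\infty$, $$T_{\text{IT-SU}}=\frac{N_t}{L+1}+\mathcal O(1),$$ where $\mathcal O(1)$ denotes a quantity bounded as $N_t\to\infty$ (with $L,\alpha$ fixed).
   Context: Channel model: for integers $N_t\ge L$, a random subset $\mathcal I\subset\{1,\dots,N_t\}$ with $|\mathcal I|=L$ is drawn uniformly among all $L$-element subsets; conditionally on $\mathcal I$, the coefficients $\bar h_i$, $i\in\mathcal I$, are i.i.d. circularly symmetric complex Gaussian $\mathcal{CN}(0,1/L)$, and $\bar h_i=0$ for $i\notin\mathcal I$. IT-SU scheme (with $N_{RF}\ge1$ RF chains and threshold $\alpha>0$): for $i=1,2,\dots,N_t$ in order, beam $i$ is trained, i.e. $\bar h_i$ becomes known. After step $i$, let $\mathcal B_i=\{l\le i:\bar h_l\neq 0\}$, $L_{B_i}=\min(N_{RF},|\mathcal B_i|)$, and let $\mathcal S_i\subset\mathcal B_i$ be the indices of the $L_{B_i}$ elements of $\mathcal B_i$ with largest $|\bar h_l|$. The training terminates at step $i$ if $\bar h_i\ne 0$ and $\sum_{l\in\mathcal S_i}|\bar h_l|^2>\alpha/N_t$; otherwise it proceeds to step $i+1$. The training length $T$ is the step at which the training terminates, and $T=N_t$ if it never terminates. The average training length is $T_{\text{IT-SU}}=\mathrm E[T]$. *)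

From HB Require Import structures.
From mathcomp Require Import all_boot all_order all_algebra.
From mathcomp Require Import all_classical all_reals all_analysis.
From mathcomp Require Import normal_distribution.

Set Implicit Arguments.
Unset Strict Implicit.
Unset Printing Implicit Defensive.

Import Order.TTheory GRing.Theory Num.Theory.

Local Open Scope classical_set_scope.
Local Open Scope ring_scope.

Section ITSU.
Variable R : realType.

(* Channel realization: real and imaginary parts of the coefficients
   \bar h_i, i = 0 .. Nt-1 (beam i+1 of the paper). *)

Definition sqmag (Nt : nat) (re im : 'I_Nt -> R) (l : 'I_Nt) : R :=
  re l ^+ 2 + im l ^+ 2.

Definition nonzero (Nt : nat) (re im : 'I_Nt -> R) (l : 'I_Nt) : bool :=
  (re l != 0) || (im l != 0).

Definition Bset (Nt : nat) (re im : 'I_Nt -> R) (i : 'I_Nt) : {set 'I_Nt} :=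
  [set l : 'I_Nt | (l <= i)%N && nonzero re im l].

Definition LB (NRF Nt : nat) (re im : 'I_Nt -> R) (i : 'I_Nt) : nat :=
  minn NRF #|Bset re im i|.

(* sum_{l in S_i} |\bar h_l|^2 : the sum of the L_{B_i} largest values of
   |\bar h_l|^2 over l in B_i (values sorted in nonincreasing order). *)
Definition topsum (NRF Nt : nat) (re im : 'I_Nt -> R) (i : 'I_Nt) : R :=
  \sum_(x <- take (LB NRF re im i)
                  (sort (fun x y : R => y <= x)
                        [seq sqmag re im l | l <- enum (Bset re im i)])) x.

Definition stops (NRF Nt : nat) (alpha : R) (re im : 'I_Nt -> R) (i : 'I_Nt)
  : bool :=
  nonzero re im i && (alpha / Nt%:R < topsum NRF re im i).

(* training length T (1-based step index); T = Nt if never terminates *)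
Definition train_len (NRF Nt : nat) (alpha : R) (re im : 'I_Nt -> R) : nat :=
  let s := enum 'I_Nt in
  if has (stops NRF alpha re im) s then (find (stops NRF alpha re im) s).+1
  else Nt.

End ITSU.

From HB Require Import structures.
From mathcomp Require Import all_boot all_order all_algebra.
From mathcomp Require Import all_classical all_reals all_analysis.
From mathcomp Require Import normal_distribution.
From mathcomp Require Import measurable_realfun ring lra.
(* Let m be the smallest index of the random support S and s := sqrt(alpha/Nt).
   When every coefficient outside S vanishes and one Gaussian component of
   \bar h_m exceeds s in modulus, the first nonzero beam already passes the
   threshold, so training stops at step m + 1.  The complementary event has
   probability p^2, where p is the probability that one N(0, 1/(2L)) component
   lies in [-s, s]; p <= 2 s * peak density, hence Nt p^2 = O(1).  Since m + 1
   counts the lower bounds of S, the hockey-stick identity gives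
   sum_S (m + 1) = C(Nt+1, L+1), so E[T] = (Nt+1)/(L+1) (1 - p^2) + O(Nt p^2). *)

Set Implicit Arguments.
Unset Strict Implicit.
Unset Printing Implicit Defensive.

Import Order.TTheory GRing.Theory Num.Theory.
Local Open Scope ring_scope.

Lemma card_ord_geq n k : #|[set j : 'I_n | (k <= j)%N]| = (n - k)%N.
Proof.
have := @big_geq_mkord _ 0%N addn k n xpredT (fun _ => 1%N).
by rewrite sum_nat_const_nat muln1 sum1dep_card => <-.
Qed.

Lemma card_ord_leq n m : (m < n)%N -> #|[set j : 'I_n | (j <= m)%N]| = m.+1.
Proof.
move=> mn; have := @big_nat_widen _ 0%N addn 0 m.+1 n xpredT (fun _ => 1%N) mn.
by rewrite sum_nat_const_nat muln1 subn0 big_mkord sum1dep_card => <-.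
Qed.

Lemma hockey_stick n k : (\sum_(i < n) 'C(n - i, k.+1) = 'C(n.+1, k.+2))%N.
Proof.
elim: n => [|n IHn]; first by rewrite big_ord0 bin_small.
rewrite big_ord_recl subn0 (eq_bigr (fun i : 'I_n => 'C(n - i, k.+1))) => [|i _].
  by rewrite IHn [in RHS]binS addnC.
by rewrite subSS.
Qed.

Definition lbounds {n} (S : {set 'I_n}) : {set 'I_n} :=
  [set k : 'I_n | [forall j in S, (k <= j)%N]].

Lemma card_lbounds_min n (S : {set 'I_n}) (m : 'I_n) :
  m \in S -> (forall j, j \in S -> (m <= j)%N) -> #|lbounds S| = m.+1.
Proof.
move=> mS m_min; rewrite -(card_ord_leq (ltn_ord m)); apply: eq_card => k.
rewrite !inE; apply/forallP/idP => [/(_ m)|km j]; first by rewrite mS.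
by apply/implyP => /m_min; apply: leq_trans.
Qed.

Lemma sum_card_lbounds n k : (0 < k)%N ->
  (\sum_(S : {set 'I_n} | #|S| == k) #|lbounds S| = 'C(n.+1, k.+1))%N.
Proof.
case: k => // k _; rewrite -hockey_stick.
under eq_bigr do rewrite -sum1dep_card big_mkcond /=.
rewrite exchange_big /=; apply: eq_bigr => i _.
rewrite -big_mkcondr sum1dep_card -card_ord_geq -cards_draws.
apply: eq_card => S; rewrite !inE andbC; congr (_ && _).
apply/forallP/fintype.subsetP => [h j jS|h j].
  by rewrite inE; have := h j; rewrite jS.
by apply/implyP => /h; rewrite inE.
Qed.

Definition smin {n} (S : {set 'I_n}) (x0 : 'I_n) : 'I_n :=
  odflt x0 [pick m in S | [forall j in S, (m <= j)%N]].

Lemma sminP n (S : {set 'I_n}) x0 x : x \in S ->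
  smin S x0 \in S /\ forall j, j \in S -> (smin S x0 <= j)%N.
Proof.
move=> xS; rewrite /smin; case: pickP => [m /andP[mS /forallP m_min]|no_min] /=.
  by split=> // j jS; have := m_min j; rewrite jS.
case: (arg_minnP val xS) => m mS m_min.
have /negbT := no_min m; rewrite /= (mS : m \in S) /= => /forallPn [j].
by rewrite negb_imply => /andP[/m_min ->].
Qed.

Lemma find_enum_ord n (p : pred 'I_n) (m : 'I_n) :
  p m -> (forall l : 'I_n, (l < m)%N -> ~~ p l) -> find p (enum 'I_n) = m.
Proof.
move=> pm before_m.
have hasp : has p (enum 'I_n) by apply/hasP; exists m; rewrite ?mem_enum.
have find_lt : (find p (enum 'I_n) < n)%N.
  by rewrite -[X in (_ < X)%N]size_enum_ord -has_find.
apply/eqP; rewrite eqn_leq; apply/andP; split; rewrite leqNgt; apply/negP.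
  by move=> /(before_find m); rewrite nth_ord_enum pm.
have := nth_find m hasp.
have -> : nth m (enum 'I_n) (find p (enum 'I_n)) = Ordinal find_lt.
  by apply: val_inj; rewrite /= nth_enum_ord.
by move=> pf lt_m; have := before_m (Ordinal find_lt) lt_m; rewrite pf.
Qed.

Section training_length.
Variables (R : realType) (NRF Nt : nat) (alpha : R) (re im : 'I_Nt -> R).

Lemma train_len_le : (train_len NRF alpha re im <= Nt)%N.
Proof.
rewrite /train_len; case: ifP => // has_stop.
by rewrite -[X in (_ < X)%N]size_enum_ord -has_find.
Qed.

Lemma train_len_first_beam (m : 'I_Nt) :
  (0 < NRF)%N -> (forall l : 'I_Nt, (l < m)%N -> re l = 0 /\ im l = 0) ->
  0 <= alpha / Nt%:R < sqmag re im m -> train_len NRF alpha re im = m.+1.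
Proof.
move=> NRF_gt0 zero_before /andP[thr_ge0 thr_lt].
have nz_m : nonzero re im m.
  apply: contraTT thr_lt; rewrite negb_or => /andP[/negPn/eqP re0 /negPn/eqP im0].
  by rewrite -leNgt /sqmag re0 im0 expr0n addr0.
have z_before (l : 'I_Nt) : (l < m)%N -> ~~ nonzero re im l.
  by move=> /zero_before[re0 im0]; rewrite /nonzero re0 im0 eqxx.
have B_m : Bset re im m = [set m].
  apply/setP => l; rewrite !inE; case: (ltngtP l m) => [lm|ml|/val_inj ->].
  - by rewrite (negbTE (z_before _ lm)) andbF; apply/esym/negbTE; rewrite neq_ltn lm.
  - by apply/esym/negbTE; rewrite neq_ltn ml orbT.
  - by rewrite nz_m eqxx.
have stops_m : stops NRF alpha re im m.
  rewrite /stops nz_m /topsum /LB B_m cards1 enum_set1 (minn_idPr NRF_gt0) /=.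
  by rewrite big_seq1.
have stops_before (l : 'I_Nt) : (l < m)%N -> ~~ stops NRF alpha re im l.
  by move=> /z_before; rewrite /stops => /negbTE ->.
rewrite /train_len (introT hasP); last by exists m; rewrite ?mem_enum.
by rewrite (find_enum_ord stops_m stops_before).
Qed.

End training_length.

Local Open Scope classical_set_scope.

Section nonneg_integral.
Context d (T : measurableType d) (R : realType) (mu : {measure set T -> \bar R}).

(* No measurability is needed: the integral of a nonnegative function is the
   supremum of the integrals of the simple functions below it. *)
Lemma ge0_le_integral_any (f g : T -> \bar R) :
  (forall x, 0 <= f x)%E -> (forall x, f x <= g x)%E ->
  (\int[mu]_x f x <= \int[mu]_x g x)%E.
Proof.
move=> f0 fg; have g0 x := le_trans (f0 x) (fg x).
rewrite !ge0_integralTE //; apply: ereal_sup_le => _ [h hf <-].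
by exists h => // x; apply: le_trans (hf x) (fg x).
Qed.

Lemma integral_sum_indic (J : finType) (a : J -> R) (A : J -> set T) :
  (forall j, 0 <= a j) -> (forall j, measurable (A j)) ->
  (\int[mu]_x (\sum_j a j * \1_(A j) x)%:E = \sum_j (a j)%:E * mu (A j))%E.
Proof.
move=> a0 mA; under eq_integral do rewrite -sumEFin.
rewrite ge0_integral_sum //; last 2 first.
- by move=> j; exact/measurable_EFinP/measurable_funM/measurable_indic.
- by move=> j x _; rewrite lee_fin mulr_ge0 // indicE ler0n.
apply: eq_bigr => j _; under eq_integral do rewrite EFinM.
rewrite ge0_integralZl_EFin ?integral_indic ?setIT //.
exact/measurable_EFinP/measurable_indic.
Qed.

End nonneg_integral.

Lemma fsbig_setT_finType (V : nmodType) (T : finType) (F : T -> V) :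
  \sum_(x \in [set: T]) F x = \sum_x F x.
Proof.
rewrite fsbig_finite; last exact: finite_finset.
apply: perm_big; apply: uniq_perm => [//||x]; first exact: index_enum_uniq.
by rewrite in_fset_set ?in_setT ?mem_index_enum //; exact: finite_finset.
Qed.

Lemma normal_prob_le_peak (R : realType) (m s : R) (A : set R) :
  s != 0 -> measurable A ->
  (normal_prob m s A <= (normal_peak s)%:E * lebesgue_measure A)%E.
Proof.
move=> s0 mA; rewrite -integral_cst //; apply: ge0_le_integral => //.
- by move=> x _; rewrite lee_fin normal_pdf_ge0.
- by apply/measurable_EFinP/measurable_funTS; exact: measurable_normal_pdf.
- by move=> x _; rewrite lee_fin normal_pdf_ub.
Qed.

Lemma lt_sqr_notin_itv (R : realType) (s x : R) :
  0 <= s -> ~ `[- s, s]%classic x -> s ^+ 2 < x ^+ 2.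
Proof.
move=> s0 notin; have : ~~ ((- s <= x) && (x <= s)).
  by apply/negP => sxs; apply: notin; rewrite /= in_itv /= sxs.
by rewrite negb_and -!ltNge => /orP[] ?; nra.
Qed.

Section expected_training_length.
Variables (R : realType) (L NRF Nt : nat) (alpha : R).
Hypotheses (L_gt0 : (0 < L)%N) (NRF_gt0 : (0 < NRF)%N) (L_le_Nt : (L <= Nt)%N)
  (alpha_gt0 : 0 < alpha).
Variables (d : measure_display) (Omega : measurableType d) (P : probability Omega R)
  (I : Omega -> {set 'I_Nt}) (re im : 'I_Nt -> Omega -> R).
Hypotheses (mI : forall S : {set 'I_Nt}, measurable [set w | I w = S])
  (mre : forall i, measurable_fun setT (re i))
  (mim : forall i, measurable_fun setT (im i)).

Local Notation sigma := (Num.sqrt ((2 * L)%:R)^-1 : R).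
Local Notation np := (normal_prob 0 sigma).
Local Notation binv := ((('C(Nt, L))%:R)^-1 : R).

Definition law_event (S : {set 'I_Nt}) (A B : 'I_Nt -> set R) : set Omega :=
  [set w | I w = S /\ forall i, A i (re i w) /\ B i (im i w)].

Hypothesis law : forall (S : {set 'I_Nt}) (A B : 'I_Nt -> set R),
  (forall i, measurable (A i)) -> (forall i, measurable (B i)) ->
  P (law_event S A B) =
  (if #|S| == L then
     binv%:E * (\prod_(i in S) (np (A i) * np (B i)))%E *
     (\prod_(i in ~: S) (\1_(A i) 0 * \1_(B i) 0))%:E
   else 0)%E.

Lemma measurable_law_event S A B : (forall i, measurable (A i)) ->
  (forall i, measurable (B i)) -> measurable (law_event S A B).
Proof.
move=> mA mB; rewrite (_ : law_event S A B = [set w | I w = S] `&`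
  \bigcap_(i in [set: 'I_Nt]) (re i @^-1` A i `&` im i @^-1` B i)).
  apply: measurableI => //; apply: fin_bigcap_measurable => [|i _].
    exact: finite_finset.
  by apply: measurableI; rewrite -[X in measurable X]setTI; [exact: mre|exact: mim].
by apply/seteqP; split=> w /= [Iw h]; split=> // i; [move=> _|]; exact: h.
Qed.

Let Nt_gt0 : (0 < Nt)%N := leq_trans L_gt0 L_le_Nt.
Let x0 : 'I_Nt := Ordinal Nt_gt0.

Let on_first (S : {set 'I_Nt}) (A : set R) (i : 'I_Nt) : set R :=
  if i \in S then (if i == smin S x0 then A else setT) else [set 0].

Let measurable_on_first S (A : set R) i : measurable A -> measurable (on_first S A i).
Proof.
by rewrite /on_first; case: ifP => _; [case: ifP|move=> _; exact: measurable_set1].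
Qed.

Lemma prob_on_first S (A B : set R) : measurable A -> measurable B ->
  P (law_event S (on_first S A) (on_first S B)) =
  (if #|S| == L then binv%:E * np A * np B else 0)%E.
Proof.
move=> mA mB; rewrite law; [|by move=> i; exact: measurable_on_first..].
case: ifP => // /eqP cardS.
have [x xS] : exists x : 'I_Nt, x \in S by apply/card_gt0P; rewrite cardS.
have [first_in _] := sminP x0 xS.
rewrite (bigD1 (smin S x0)) //= big1 => [|i /andP[iS i_first]]; last first.
  by rewrite /on_first iS (negbTE i_first) probability_setT mule1.
rewrite big1 => [|i]; last first.
  by rewrite inE /on_first => /negbTE ->; rewrite indicE mem_set //= mulr1.
by rewrite /on_first !ifT // !mule1 muleA.
Qed.

Let s : R := Num.sqrt (alpha / Nt%:R).
Let K : set R := `[- s, s].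
Let p : R := fine (np K).

Let sqr_s : s ^+ 2 = alpha / Nt%:R.
Proof. by rewrite sqr_sqrtr // divr_ge0 ?ler0n // ltW. Qed.

Let measurable_K : measurable K. Proof. exact: measurable_itv. Qed.

Let npK : np K = p%:E.
Proof. by rewrite fineK // fin_num_measure. Qed.

Let stops_at_first S : set Omega :=
  law_event S (on_first S setT) (on_first S setT) `\`
  law_event S (on_first S K) (on_first S K).

Let measurable_law_on_first S (A : set R) :
  measurable A -> measurable (law_event S (on_first S A) (on_first S A)).
Proof. by move=> mA; apply: measurable_law_event => i; exact: measurable_on_first. Qed.

Let measurable_stops_at_first S : measurable (stops_at_first S).
Proof. by apply: measurableD; exact: measurable_law_on_first. Qed.

Lemma prob_stops_at_first S :
  P (stops_at_first S) = (if #|S| == L then binv * (1 - p ^+ 2) else 0)%:E.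
Proof.
have small_sub : law_event S (on_first S K) (on_first S K) `<=`
                 law_event S (on_first S setT) (on_first S setT).
  move=> w [Iw small]; split=> // i; have := small i; rewrite /on_first.
  by case: ifP => // _; case: ifP.
have : P (law_event S (on_first S setT) (on_first S setT)) =
       (P (stops_at_first S) + P (law_event S (on_first S K) (on_first S K)))%E.
  rewrite -[in RHS](setIidr small_sub).
  by apply: measureDI; exact: measurable_law_on_first.
rewrite !prob_on_first // probability_setT npK.
rewrite -(fineK (fin_num_measure P _ (measurable_stops_at_first S))).
by case: ifP => _; rewrite -?EFinM -EFinD => -[decomp]; congr EFin; lra.
Qed.

Local Notation T w := (train_len NRF alpha (fun i => re i w) (fun i => im i w)).

Lemma train_len_stops_at_first S w : stops_at_first S w -> T w = #|lbounds S|.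
Proof.
move=> [[Iw support] not_small].
have outside0 i : i \notin S -> re i w = 0 /\ im i w = 0.
  by move=> iS; have := support i; rewrite /on_first (negbTE iS).
have first_large : ~ (K (re (smin S x0) w) /\ K (im (smin S x0) w)).
  move=> [Kre Kim]; apply: not_small; split=> // i; have := support i.
  by rewrite /on_first; case: ifP => // _; case: eqP => [->|].
have first_in : smin S x0 \in S.
  apply/negPn/negP => /outside0[re0 im0]; apply: first_large.
  by rewrite re0 im0 /K /= in_itv /= oppr_le0 sqrtr_ge0.
have [_ first_min] := sminP x0 first_in.
rewrite (card_lbounds_min first_in first_min); apply: train_len_first_beam => //.
  move=> l lt_first; apply: outside0; apply: contraTN lt_first => /first_min.
  by rewrite -leqNgt.
rewrite divr_ge0 ?ler0n ?ltW //= -sqr_s /sqmag.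
have s0 : 0 <= s := sqrtr_ge0 _.
have re2 := sqr_ge0 (re (smin S x0) w); have im2 := sqr_ge0 (im (smin S x0) w).
have [Kre|/(lt_sqr_notin_itv s0)] := pselect (K (re (smin S x0) w)); last lra.
have /(lt_sqr_notin_itv s0) : ~ K (im (smin S x0) w) by move=> Kim; exact: first_large.
lra.
Qed.

Lemma sum_indic_stops_at_first (a : {set 'I_Nt} -> R) w :
  \sum_S a S * \1_(stops_at_first S) w = a (I w) * \1_(stops_at_first (I w)) w.
Proof.
rewrite (bigD1 (I w)) //= big1 ?addr0 // => S /negbTE SIw.
by rewrite indicE memNset ?mulr0 // => -[[Iw _] _]; rewrite Iw eqxx in SIw.
Qed.

Let sumr_const_L_sets (x : R) : \sum_(S : {set 'I_Nt} | #|S| == L) x = 'C(Nt, L)%:R * x.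
Proof.
by have := card_draws 'I_Nt L; rewrite cardsE card_ord sumr_const mulr_natl => ->.
Qed.

Let binv_mul_bin : binv * 'C(Nt, L)%:R = 1.
Proof. by rewrite mulVf // pnatr_eq0 -lt0n bin_gt0. Qed.

Lemma sum_prob_stops_at_first : (\sum_S P (stops_at_first S) = (1 - p ^+ 2)%:E)%E.
Proof.
under eq_bigr do rewrite prob_stops_at_first.
rewrite sumEFin -big_mkcond /= sumr_const_L_sets.
by rewrite mulrA [_ * binv]mulrC binv_mul_bin mul1r.
Qed.

Let bin_ratio : 'C(Nt.+1, L.+1)%:R * binv = (Nt.+1)%:R / (L.+1)%:R.
Proof.
have C0 : 'C(Nt, L)%:R != 0 :> R by rewrite pnatr_eq0 -lt0n bin_gt0.
have L0 : (L.+1)%:R != 0 :> R by rewrite pnatr_eq0.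
have := congr1 (GRing.natmul (1 : R)) (mul_bin_diag Nt.+1 L); rewrite !natrM /= => h.
by rewrite -[(Nt.+1)%:R](mulfK C0) h; field; apply/andP.
Qed.

Lemma sum_lbounds_prob_stops_at_first :
  (\sum_S (#|lbounds S|%:R)%:E * P (stops_at_first S) =
   ((Nt.+1)%:R / (L.+1)%:R * (1 - p ^+ 2))%:E)%E.
Proof.
under eq_bigr do rewrite prob_stops_at_first -EFinM.
rewrite sumEFin; congr EFin.
rewrite (eq_bigr (fun S : {set 'I_Nt} =>
  if #|S| == L then #|lbounds S|%:R * (binv * (1 - p ^+ 2)) else 0));
  last by move=> S _; case: ifP; rewrite ?mulr0.
by rewrite -big_mkcond /= -mulr_suml -natr_sum sum_card_lbounds // mulrA bin_ratio.
Qed.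

Lemma expected_train_len_ge :
  (((Nt.+1)%:R / (L.+1)%:R * (1 - p ^+ 2))%:E <= \int[P]_w (T w)%:R%:E)%E.
Proof.
rewrite -sum_lbounds_prob_stops_at_first.
rewrite -integral_sum_indic => [|S|//]; last exact: ler0n.
apply: ge0_le_integral_any => w; rewrite lee_fin sum_indic_stops_at_first indicE.
  by rewrite mulr_ge0 ?ler0n.
have [stops|not_stops] := pselect (stops_at_first (I w) w).
  by rewrite mem_set // mulr1 (train_len_stops_at_first stops).
by rewrite memNset // mulr0 ler0n.
Qed.

Let stops_early : set Omega :=
  \bigcup_(S in [set: {set 'I_Nt}]) stops_at_first S.

Let measurable_stops_early : measurable stops_early.
Proof. by apply: fin_bigcup_measurable => //; exact: finite_finset. Qed.

Lemma prob_not_stops_early : P (~` stops_early) = (p ^+ 2)%:E.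
Proof.
rewrite probability_setC // measure_fin_bigcup //.
- by rewrite fsbig_setT_finType sum_prob_stops_at_first -EFinB opprB addrC subrK.
- exact: finite_finset.
- move=> S S' _ _ [w [[[IwS _] _] [[IwS' _] _]]].
  by rewrite -IwS -IwS'.
Qed.

Lemma expected_train_len_le : (\int[P]_w (T w)%:R%:E <=
  ((Nt.+1)%:R / (L.+1)%:R * (1 - p ^+ 2) + Nt%:R * p ^+ 2)%:E)%E.
Proof.
pose early w : R := \sum_S #|lbounds S|%:R * \1_(stops_at_first S) w.
pose late w : R := Nt%:R * \1_(~` stops_early) w.
have early_ge0 w : 0 <= early w.
  by rewrite sumr_ge0 // => S _; rewrite mulr_ge0 ?ler0n.
have late_ge0 w : 0 <= late w by rewrite mulr_ge0 ?ler0n.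
apply: (@le_trans _ _ (\int[P]_w ((early w)%:E + (late w)%:E))%E).
  apply: ge0_le_integral_any => w; first by rewrite lee_fin.
  rewrite -EFinD lee_fin.
  rewrite /early /late sum_indic_stops_at_first !indicE.
  have [stops|not_stops] := pselect (stops_at_first (I w) w).
    by rewrite mem_set // mulr1 (train_len_stops_at_first stops) lerDl late_ge0.
  rewrite memNset // mulr0 add0r mem_set ?mulr1 ?ler_nat ?train_len_le //.
  by move=> [S _ stopsS]; apply: not_stops; case: (stopsS) => -[IwS _] _; rewrite IwS.
rewrite ge0_integralD //; last 4 first.
- by move=> w _; rewrite lee_fin.
- apply/measurable_EFinP; rewrite /early; apply: measurable_sum => S.
  by apply: measurable_funM => //; exact: measurable_indic.
- by move=> w _; rewrite lee_fin.
- apply/measurable_EFinP; rewrite /late.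
  by apply: measurable_funM => //; apply: measurable_indic; exact: measurableC.
rewrite /early /late integral_sum_indic //.
under eq_integral do rewrite EFinM.
have measurable_late : measurable (~` stops_early) by exact: measurableC.
rewrite ge0_integralZl_EFin ?integral_indic ?setIT //; last first.
  by apply/measurable_EFinP; exact: measurable_indic.
(* [P] occurs here through its measure coercion, not its probability one:
   the contextual pattern lets the rewrite match up to conversion. *)
rewrite sum_lbounds_prob_stops_at_first [X in (_ * X)%E]prob_not_stops_early.
by rewrite -EFinM -EFinD.
Qed.

Lemma Nt_sqr_p_le : Nt%:R * p ^+ 2 <= 4 * normal_peak sigma ^+ 2 * alpha.
Proof.
have sigma0 : sigma != 0 by rewrite gt_eqF // sqrtr_gt0 invr_gt0 ltr0n muln_gt0.
have s_gt0 : 0 < s by rewrite sqrtr_gt0 divr_gt0 ?ltr0n.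
have p0 : 0 <= p by rewrite -lee_fin -npK.
have pM : p <= normal_peak sigma * (s + s).
  rewrite -lee_fin -npK EFinM.
  apply: le_trans (normal_prob_le_peak _ sigma0 measurable_K) _.
  by rewrite lebesgue_measure_itv /= lte_fin gtrN // -EFinB opprK.
have M0 : 0 <= normal_peak sigma := normal_peak_ge0 sigma.
have := ler_pM p0 p0 pM pM; rewrite -expr2 => p2.
have -> : alpha = Nt%:R * s ^+ 2 by rewrite sqr_s mulrC divfK // pnatr_eq0 -lt0n.
have Nt0 : 0 <= Nt%:R :> R := ler0n R Nt.
nra.
Qed.

Theorem expected_train_len_near :
  (`| \int[P]_w (T w)%:R%:E - (Nt%:R / (L.+1)%:R)%:E |
     <= (1 + 4 * normal_peak sigma ^+ 2 * alpha)%:E)%E.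
Proof.
have ge := expected_train_len_ge; have le := expected_train_len_le.
have fin : (\int[P]_w (T w)%:R%:E)%E \is a fin_num.
  by rewrite fin_numElt (lt_le_trans _ ge) ?ltNyr // (le_lt_trans le) ?ltry.
rewrite -(fineK fin) lee_fin in ge; rewrite -(fineK fin) lee_fin in le.
rewrite -(fineK fin) -EFinB abse_EFin lee_fin ler_norml.
set x := fine _ in ge le *.
pose u : R := (L.+1)%:R^-1.
have u0 : 0 <= u by rewrite invr_ge0 ler0n.
have u_half : u <= 2^-1 by rewrite lef_pV2 ?posrE ?ltr0n // ler_nat ltnS.
have Nt1 : 1 <= Nt%:R :> R by rewrite ler1n.
have q0 : 0 <= p ^+ 2 := sqr_ge0 p.
have bound := Nt_sqr_p_le.
have -> : Nt%:R / (L.+1)%:R = Nt%:R * u by [].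
rewrite -[(Nt.+1)%:R]natr1 -/u in ge le.
have Yq_ge0 : 0 <= (Nt%:R + 1) * u * p ^+ 2.
  by apply: mulr_ge0 => //; apply: mulr_ge0 => //; lra.
have Yq_le : (Nt%:R + 1) * u * p ^+ 2 <= Nt%:R * p ^+ 2.
  by apply: ler_wpM2r => //; nra.
apply/andP; split; nra.
Qed.

End expected_training_length.

Theorem corollary1 (R : realType) (L : nat) (alpha : R) (NRF : nat) :
  (1 <= L)%N -> 0 < alpha -> (1 <= NRF)%N ->
  exists (C : R) (N0 : nat),
  forall (Nt : nat) (d : measure_display) (Omega : measurableType d)
         (P : probability Omega R)
         (I : Omega -> {set 'I_Nt}) (re im : 'I_Nt -> Omega -> R),
    (N0 <= Nt)%N -> (L <= Nt)%N ->
    (* measurability of the random objects *)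
    (forall S : {set 'I_Nt}, measurable [set w | I w = S]) ->
    (forall i, measurable_fun setT (re i)) ->
    (forall i, measurable_fun setT (im i)) ->
    (* joint law: I uniform over L-subsets; given I, \bar h_i (i in I) are
       i.i.d. CN(0,1/L) (real and imaginary parts i.i.d. N(0, 1/(2L))),
       and \bar h_i = 0 for i not in I *)
    (forall (S : {set 'I_Nt}) (A B : 'I_Nt -> set R),
        (forall i, measurable (A i)) -> (forall i, measurable (B i)) ->
        P [set w | I w = S /\ forall i, A i (re i w) /\ B i (im i w)] =
        (if #|S| == L then
           ((('C(Nt, L))%:R)^-1)%:E *
           (\prod_(i in S)
              (normal_prob 0 (Num.sqrt ((2 * L)%:R)^-1) (A i) *
               normal_prob 0 (Num.sqrt ((2 * L)%:R)^-1) (B i)))%E *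
           (\prod_(i in ~: S) (\1_(A i) 0 * \1_(B i) 0))%:E
         else 0)%E) ->
    (`| \int[P]_w ((train_len NRF alpha (fun i => re i w) (fun i => im i w))%:R)%:E
        - (Nt%:R / (L.+1)%:R)%:E | <= C%:E)%E.

Proof.
move=> L_gt0 alpha_gt0 NRF_gt0.
exists (1 + 4 * normal_peak (Num.sqrt ((2 * L)%:R)^-1) ^+ 2 * alpha), 0%N.
move=> Nt d Omega P I re im _ L_le_Nt mI mre mim law.
exact: (expected_train_len_near L_gt0 NRF_gt0 L_le_Nt alpha_gt0 mI mre mim law).
Qed.
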